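(* Let $m\in\mathbb{N}$ and let $\frac{m+1}{m}\le\lambda<\frac{m}{m-1}$ (for $m=1$ this condition means $2\le\lambda<+\infty$). Let $f(x)=\lfloor\lambda x\rfloor$ for $x\in\mathbb{R}$, with $f^n$ its $n$-fold iterate. Then: - for each $k\in\{0,1,\dots,m-1\}$, $\lim_{n\to\infty}f^n(x)=k$ for all $x\in\left[\frac{k}{\lambda},\frac{k+1}{\lambda}\right)$; - $\lim_{n\to\infty}f^n(x)=-\infty$ for all $x\in(-\infty,0)$; - $\lim_{n\to\infty}f^n(x)=+\infty$ for all $x\in\left[\frac{m}{\lambda},+\infty\right)$.
   Context: $\lfloor x\rfloor=\max\{m\in\mathbb{Z}: m\le x\}$ denotes the floor function; $\mathbb{N}=\{1,2,\dots\}$. *)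

From Stdlib Require Import Reals.
Open Scope R_scope.

(* floor function: Int_part x = up x - 1 is the greatest integer <= x *)
Definition Rfloor (x : R) : R := IZR (Int_part x).

Definition flam (lam : R) (x : R) : R := Rfloor (lam * x).

Definition fiter (lam : R) (n : nat) (x : R) : R := Nat.iter n (flam lam) x.

Definition cv_minus_infty (u : nat -> R) : Prop :=
  forall M : R, exists N : nat, forall n : nat, (N <= n)%nat -> u n < M.

From Stdlib Require Import Reals Lra Lia ZArith.
Open Scope R_scope.

(* Write c := lam - 1 > 0.  The hypotheses say exactly that c * (m - 1) < 1 <= c * m.
   For an integer y, f(y) = y + floor(c y).  Hence the integers 0, ..., m - 1 are
   fixed points (c k < 1), and [k / lam, (k + 1) / lam) is mapped onto k in one step;
   for y < 0 we have f(y) <= y + c y, so the orbit decreases at least linearly;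
   and once y >= m we have c y >= 1, so each step adds at least 1. *)

Lemma Rfloor_le (z : R) : Rfloor z <= z.
Proof. unfold Rfloor; destruct (base_Int_part z); lra. Qed.

Lemma Rfloor_ge (k : Z) (z : R) : IZR k <= z -> IZR k <= Rfloor z.
Proof.
  intros Hkz; unfold Rfloor; destruct (base_Int_part z) as [_ Hlt].
  apply IZR_le.
  assert (Hk : IZR k < IZR (Int_part z) + 1) by lra.
  rewrite <- plus_IZR in Hk; apply lt_IZR in Hk; lia.
Qed.

Lemma Rfloor_eq (k : Z) (z : R) : IZR k <= z < IZR k + 1 -> Rfloor z = IZR k.
Proof. intros Hz; unfold Rfloor; rewrite <- (Int_part_spec z k); lra. Qed.

Lemma fiter_S (lam : R) (n : nat) (x : R) :
  fiter lam (S n) x = flam lam (fiter lam n x).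
Proof. reflexivity. Qed.

Lemma Un_cv_shift_const (u : nat -> R) (l : R) :
  (forall n, u (S n) = l) -> Un_cv u l.
Proof.
  intros Hu eps Heps; exists 1%nat; intros [|n] Hn; [lia|].
  unfold R_dist; rewrite Hu, Rminus_diag, Rabs_R0; exact Heps.
Qed.

Lemma cv_minus_infty_linear (u : nat -> R) (b c : R) :
  c < 0 -> (forall n, u n <= b + INR n * c) -> cv_minus_infty u.
Proof.
  intros Hc Hu M.
  destruct (INR_archimed (- c) (b - M)) as [N HN]; [lra|].
  exists N; intros n Hn.
  apply le_INR in Hn.
  assert (INR N * - c <= INR n * - c) by (apply Rmult_le_compat_r; lra).
  specialize (Hu n); lra.
Qed.

Lemma cv_infty_shift_linear (u : nat -> R) (b : R) :
  (forall n, b + INR n <= u (S n)) -> cv_infty u.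
Proof.
  intros Hu M.
  destruct (INR_unbounded (M - b)) as [N HN].
  exists (S N); intros [|n] Hn; [lia|].
  assert (INR N <= INR n) by (apply le_INR; lia).
  specialize (Hu n); lra.
Qed.

Section Orbits.

Variable lam : R.
Hypothesis lam_gt1 : 1 < lam.

Lemma flam_nat_fixed (k : nat) :
  (lam - 1) * INR k < 1 -> flam lam (INR k) = INR k.
Proof.
  intros Hk; unfold flam; rewrite INR_IZR_INZ; apply Rfloor_eq.
  rewrite <- INR_IZR_INZ; pose proof (pos_INR k); nra.
Qed.

Lemma flam_preimage (k : nat) (x : R) :
  INR k / lam <= x < (INR k + 1) / lam -> flam lam x = INR k.
Proof.
  intros Hx; unfold flam; rewrite INR_IZR_INZ; apply Rfloor_eq.
  rewrite <- INR_IZR_INZ.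
  assert (Ek : INR k = lam * (INR k / lam)) by (field; lra).
  assert (Ek1 : INR k + 1 = lam * ((INR k + 1) / lam)) by (field; lra).
  split; nra.
Qed.

Lemma fiter_fixed_after_one (x p : R) :
  flam lam x = p -> flam lam p = p -> forall n, fiter lam (S n) x = p.
Proof.
  intros Hx Hp; induction n as [|n IH]; [exact Hx|].
  rewrite fiter_S, IH; exact Hp.
Qed.

Lemma fiter_neg_le (x : R) :
  x < 0 -> forall n, fiter lam n x <= x + INR n * ((lam - 1) * x).
Proof.
  intros Hx; induction n as [|n IH]; [simpl; lra|].
  rewrite fiter_S, S_INR; unfold flam.
  pose proof (Rfloor_le (lam * fiter lam n x)).
  assert (0 <= INR n * ((lam - 1) * - x)) by (apply Rmult_le_pos; [apply pos_INR | nra]).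
  assert (Hy : fiter lam n x <= x) by nra.
  (* f(y) <= y + (lam - 1) y <= y + (lam - 1) x, as y <= x *)
  assert ((lam - 1) * (fiter lam n x - x) <= 0) by nra.
  nra.
Qed.

Lemma fiter_escape (m : nat) (x : R) :
  1 <= (lam - 1) * INR m -> INR m / lam <= x ->
  forall n, INR m + INR n <= fiter lam (S n) x.
Proof.
  intros Hm Hx; induction n as [|n IH].
  - simpl; rewrite Rplus_0_r; unfold flam; rewrite INR_IZR_INZ.
    apply Rfloor_ge; rewrite <- INR_IZR_INZ.
    assert (Em : INR m = lam * (INR m / lam)) by (field; lra); nra.
  - rewrite fiter_S; unfold flam.
    replace (INR m + INR (S n)) with (IZR (Z.of_nat (m + S n)))
      by (rewrite <- INR_IZR_INZ, plus_INR; reflexivity).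
    apply Rfloor_ge; rewrite <- INR_IZR_INZ, plus_INR, S_INR.
    pose proof (pos_INR n); nra.
Qed.

End Orbits.

Theorem theorem3 (m : nat) (lam : R) (hm : (1 <= m)%nat)
  (hlo : (INR m + 1) / INR m <= lam)
  (hhi : m = 1%nat \/ lam < INR m / (INR m - 1)) :
  (forall k : nat, (k < m)%nat ->
     forall x : R, INR k / lam <= x < (INR k + 1) / lam ->
       Un_cv (fun n => fiter lam n x) (INR k))
  /\ (forall x : R, x < 0 -> cv_minus_infty (fun n => fiter lam n x))
  /\ (forall x : R, INR m / lam <= x -> cv_infty (fun n => fiter lam n x)).
Proof.
  assert (Hm1 : 1 <= INR m) by (apply (le_INR 1); exact hm).
  assert (Hescape : 1 <= (lam - 1) * INR m).
  { assert (E : INR m + 1 = (INR m + 1) / INR m * INR m) by (field; lra).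
    assert (INR m + 1 <= lam * INR m) by (rewrite E; nra); lra. }
  assert (Hlam : 1 < lam) by nra.
  assert (Hfixed : (lam - 1) * (INR m - 1) < 1).
  { destruct (Nat.eq_dec m 1) as [-> | Hne]; [simpl; lra|].
    destruct hhi as [? | Hlt]; [lia|].
    assert (Hm2 : INR 2 <= INR m) by (apply le_INR; lia); simpl in Hm2.
    assert (E : INR m = INR m / (INR m - 1) * (INR m - 1)) by (field; lra).
    assert (lam * (INR m - 1) < INR m)
      by (rewrite E at 2; apply Rmult_lt_compat_r; lra); lra. }
  split; [|split].
  - intros k Hk x Hx; apply Un_cv_shift_const, fiter_fixed_after_one.
    + exact (flam_preimage lam Hlam k x Hx).
    + apply flam_nat_fixed; [exact Hlam|].
      assert (INR k <= INR m - 1)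
        by (change 1 with (INR 1); rewrite <- minus_INR by lia; apply le_INR; lia).
      pose proof (pos_INR k); nra.
  - intros x Hx; apply (cv_minus_infty_linear _ x ((lam - 1) * x)); [nra|].
    exact (fiter_neg_le lam Hlam x Hx).
  - intros x Hx; apply (cv_infty_shift_linear _ (INR m)).
    exact (fiter_escape lam Hlam m x Hescape Hx).
Qed.
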